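(* Let $(\gamma,\delta)$ be any pair of partitions. For each $1\le j\le l(\delta)$ let $$d_j=\#\{i:\ 2\le i\le l(\gamma),\ \gamma_i>\delta_j\}-\#\{i<j:\ \delta_i\text{ is unbalanced}\}.$$ Then $d_j\ge0$ for every $j$.
   Context: A partition is a finite nonincreasing sequence of positive integers (possibly empty); $l(\lambda)$ is its number of parts. Balanced parts: let $(\gamma,\delta)$ be a pair of partitions, with the convention $\gamma_j=0$ for $j>l(\gamma)$. The parts $\delta_1,\delta_2,\dots,\delta_{l(\delta)}$ are classified as balanced or unbalanced recursively in increasing order of index: $\delta_i$ is balanced if and only if $\gamma_{i+1}\le\delta_i$ and the number of indices $j$ with $2\le j\le l(\gamma)$ and $\gamma_j>\delta_i$ equals the number of indices $j<i$ for which $\delta_j$ is unbalanced; otherwise $\delta_i$ is unbalanced. *)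

From mathcomp Require Import all_boot all_order all_algebra.
Set Implicit Arguments. Unset Strict Implicit. Unset Printing Implicit Defensive.

Definition is_partition (l : seq nat) : Prop :=
  sorted geq l /\ all (fun x => 0 < x) l.

(* 1-based part access with gamma_j = 0 for j > l(gamma) (and for j = 0). *)
Definition part (l : seq nat) (j : nat) : nat := nth 0 l j.-1.

Definition nbig (gamma : seq nat) (x : nat) : nat :=
  #|[set j : 'I_(size gamma).+1 | (2 <= j) && (x < part gamma j)]|.

(* balanced_flags gamma delta : for i = 1..l(delta) (listed in order),
   whether delta_i is balanced, computed recursively in increasing order. *)
Fixpoint bal_aux (gamma : seq nat) (d : seq nat) (i unb : nat) : seq bool :=
  match d with
  | [::] => [::]
  | x :: d' =>
      let b := (part gamma i.+1 <= x) && (nbig gamma x == unb) in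
      b :: bal_aux gamma d' i.+1 (unb + ~~ b)
  end.

Definition balanced_flags (gamma delta : seq nat) : seq bool :=
  bal_aux gamma delta 1 0.

Definition balanced (gamma delta : seq nat) (i : nat) : bool :=
  nth false (balanced_flags gamma delta) i.-1.

Definition n_unbal_before (gamma delta : seq nat) (j : nat) : nat :=
  #|[set i : 'I_j | (1 <= i) && ~~ balanced gamma delta i]|.

Definition d_val (gamma delta : seq nat) (j : nat) : int :=
  (nbig gamma (part delta j))%:Z - (n_unbal_before gamma delta j)%:Z.

From mathcomp Require Import all_boot all_order all_algebra.
Import Order.TTheory GRing.Theory Num.Theory.

Set Implicit Arguments. Unset Strict Implicit. Unset Printing Implicit Defensive.

(* Writing
   u_k for the number of unbalanced parts among delta_1, ..., delta_k, the
   claim becomes u_k <= nbig(delta_{k+1}), proved by induction on k using: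
   - nbig is antitone, and delta is nonincreasing, so nbig(delta_k) grows;
   - if delta_{k+1} is balanced, u_{k+1} = u_k;
   - if it is unbalanced because nbig(delta_{k+1}) <> u_k, the invariant
     u_k <= nbig(delta_{k+1}) becomes strict;
   - if it is unbalanced because delta_{k+1} < gamma_{k+2}, then gamma_2,
     ..., gamma_{k+2} all exceed delta_{k+2}, so nbig(delta_{k+2}) >= k+1,
     while trivially u_{k+1} <= k+1. *)

Lemma card_ord_count n (P : pred nat) :
  #|[set j : 'I_n | P j]| = count P (iota 0 n).
Proof.
rewrite cardsE cardE -(size_map val) -filter_map -val_enum_ord -?enumT size_filter.
by rewrite /enum_mem -enumT.
Qed.

Lemma nbigE g x :
  nbig g x = count (fun j => (2 <= j) && (x < part g j)) (iota 0 (size g).+1).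
Proof. exact: card_ord_count. Qed.

Lemma sorted_geq_nth (s : seq nat) a b :
  sorted geq s -> a <= b -> b < size s -> nth 0 s b <= nth 0 s a.
Proof.
move=> ss ab bs; have geq_trans : transitive geq by move=> ? ? ? /[swap]; apply: leq_trans.
apply: (sorted_leq_nth geq_trans leqnn 0 ss) => //; rewrite inE //.
exact: leq_ltn_trans bs.
Qed.

Lemma nbig_antitone g x y : x <= y -> nbig g y <= nbig g x.
Proof.
move=> le_xy; rewrite !nbigE; apply: sub_count => j /andP[-> /=].
exact: leq_ltn_trans.
Qed.

(* If x < gamma_{k+2} then gamma_2, ..., gamma_{k+2} all exceed x. *)
Lemma nbig_lower_bound g x k :
  sorted geq g -> x < part g k.+2 -> k.+1 <= nbig g x.
Proof.
move=> sg lt_x.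
have lt_k : k.+1 < size g.
  by rewrite ltnNge; apply: contraTN lt_x => le; rewrite /part /= nth_default.
have all_big : all (fun j => (2 <= j) && (x < part g j)) (iota 2 k.+1).
  apply/allP => j; rewrite mem_iota => /andP[le_2j le_jk]; rewrite le_2j /=.
  case: j le_2j le_jk => [|[|j]] // _ le_jk; rewrite /part /= in lt_x *.
  by apply: (leq_trans lt_x); apply: sorted_geq_nth; rewrite // -ltnS.
have sub_iota : subseq (iota 2 k.+1) (iota 0 (size g).+1).
  apply: infixW; apply/infixP; exists (iota 0 2), (iota (k.+3) ((size g).+1 - k.+3)).
  by rewrite -iotaD -iotaD addnA subnKC.
move: all_big; rewrite all_count => /eqP count_all.
by rewrite nbigE -{1}(size_iota 2 k.+1) -count_all; apply: leq_count_subseq.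
Qed.

Lemma bal_aux_nth g d i unb k : k < size d ->
  nth false (bal_aux g d i unb) k =
  (part g (i + k).+1 <= nth 0 d k) &&
  (nbig g (nth 0 d k) ==
     unb + count (fun t => ~~ nth false (bal_aux g d i unb) t) (iota 0 k)).
Proof.
elim: d i unb k => [|x d IH] i unb [|k] //=; first by rewrite !addn0.
by rewrite ltnS => lt_k; rewrite IH // addSnnS addnA (iotaDl 1 0 k) count_map.
Qed.

Section Invariant.

Variables gamma delta : seq nat.
Hypothesis sorted_gamma : sorted geq gamma.
Hypothesis sorted_delta : sorted geq delta.

Definition unbal_prefix (k : nat) : nat :=
  count (fun t => ~~ nth false (balanced_flags gamma delta) t) (iota 0 k).

Lemma n_unbal_beforeE k : n_unbal_before gamma delta k.+1 = unbal_prefix k.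
Proof.
rewrite /n_unbal_before (card_ord_count _ (fun i => (1 <= i) && ~~ balanced _ _ i)).
by rewrite /= (iotaDl 1 0 k) count_map.
Qed.

Lemma balanced_flagE k : k < size delta ->
  nth false (balanced_flags gamma delta) k =
  (part gamma k.+2 <= nth 0 delta k) && (nbig gamma (nth 0 delta k) == unbal_prefix k).
Proof. by move=> lt_k; rewrite /balanced_flags bal_aux_nth. Qed.

Lemma unbal_prefixS k :
  unbal_prefix k.+1 = unbal_prefix k + ~~ nth false (balanced_flags gamma delta) k.
Proof. by rewrite /unbal_prefix -addn1 iotaD count_cat /= addn0. Qed.

Lemma unbal_prefix_le_nbig k : k < size delta ->
  unbal_prefix k <= nbig gamma (nth 0 delta k).
Proof.
elim: k => [//|k IH] lt_k.
have lt_k' : k < size delta by apply: ltnW.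
have {}IH := IH lt_k'.
have nbig_grows : nbig gamma (nth 0 delta k) <= nbig gamma (nth 0 delta k.+1).
  exact/nbig_antitone/sorted_geq_nth.
rewrite unbal_prefixS; move: (balanced_flagE lt_k').
case: (nth false _ k) => /= flagE; first by rewrite addn0 (leq_trans IH).
have [le_gamma | lt_gamma] := leqP (part gamma k.+2) (nth 0 delta k).
  move: flagE; rewrite le_gamma /= => /esym/negbT ne_u.
  by rewrite addn1 (leq_trans _ nbig_grows) // ltn_neqAle eq_sym ne_u IH.
have lt_next : nth 0 delta k.+1 < part gamma k.+2.
  exact: leq_ltn_trans (sorted_geq_nth _ _ _) lt_gamma.
apply: leq_trans (nbig_lower_bound sorted_gamma lt_next).
by rewrite addn1 ltnS -[X in _ <= X](size_iota 0 k) count_size.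
Qed.

End Invariant.

Theorem mainTheorem4 (gamma delta : seq nat) :
  is_partition gamma -> is_partition delta ->
  forall j : nat, 1 <= j <= size delta ->
  (0 <= d_val gamma delta j)%R.
Proof.
move=> [sorted_gamma _] [sorted_delta _] [|k] //= lt_k.
rewrite /d_val subr_ge0 lez_nat n_unbal_beforeE.
exact: unbal_prefix_le_nbig.
Qed.
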